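(* For integers $r,k\ge0$ and real $\alpha$ with $\alpha>k>r$, writing $C_\beta:=H_\beta^3+3H_\beta H_\beta^{(2)}+2H_\beta^{(3)}$ and $Q_\beta:=H_\beta^4+6H_\beta^2H_\beta^{(2)}+8H_\beta H_\beta^{(3)}+3\big(H_\beta^{(2)}\big)^2+6H_\beta^{(4)}$, $$\sum_{n=1}^\infty\frac{C_{n+\alpha}}{(n+r)(n+k)}=\frac{k-\alpha}{k-r}\left\{\frac{Q_{\alpha-k}}{\alpha-k}-\sum_{j=1}^k\frac{C_{\alpha+j-k}}{j(\alpha+j-k)}\right\}+\frac{\alpha-r}{k-r}\left\{\frac{Q_{\alpha-r}}{\alpha-r}-\sum_{j=1}^r\frac{C_{\alpha+j-r}}{j(\alpha+j-r)}\right\}.$$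
   Context: Shifted harmonic numbers: for a real $\alpha$ that is not a negative integer, $H_\alpha := \sum_{k=1}^\infty\left(\frac1k-\frac1{k+\alpha}\right)$ and, for integers $m\ge 2$, $H_\alpha^{(m)} := \sum_{k=1}^\infty\left(\frac1{k^m}-\frac1{(k+\alpha)^m}\right)=\zeta(m)-\zeta(m,\alpha+1)$, where $\zeta$ is the Riemann zeta function and $\zeta(s,\alpha+1)=\sum_{n=1}^\infty (n+\alpha)^{-s}$ is the Hurwitz zeta function. Powers such as $H_\alpha^2$ mean $(H_\alpha)^2$. Empty sums are $0$. *)

From Stdlib Require Import Reals Lra Lia ClassicalEpsilon.
Open Scope R_scope.

(* Value of a real series: the (unique) l with infinite_sum f l, chosen by
   Hilbert's epsilon (only meaningful when the series converges). *)
Definition series_value (f : nat -> R) : R :=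
  epsilon (inhabits 0) (fun l => infinite_sum f l).

(* Shifted harmonic numbers of order m:
   H_a^(m) = sum_{k>=1} (1/k^m - 1/(k+a)^m). (index k = i+1, i >= 0) *)
Definition Hm (m : nat) (a : R) : R :=
  series_value (fun i => / (INR (i + 1)) ^ m - / (INR (i + 1) + a) ^ m).

Definition H (a : R) : R := Hm 1 a.

Definition Cb (b : R) : R :=
  H b ^ 3 + 3 * H b * Hm 2 b + 2 * Hm 3 b.

Definition Qb (b : R) : R :=
  H b ^ 4 + 6 * H b ^ 2 * Hm 2 b + 8 * H b * Hm 3 b + 3 * (Hm 2 b) ^ 2 + 6 * Hm 4 b.

Fixpoint sum1 (n : nat) (f : nat -> R) : R :=
  match n with
  | O => 0
  | S p => sum1 p f + f (S p)
  end.

(* Write [E_j] for the complete Bell polynomial in [H, H^(2), H^(3), H^(4)] with the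
   factorial weights, so that [E_3 = C] and [E_4 = Q].  The recurrence
   [H^(m)_(x+1) = H^(m)_x + (x+1)^(-m)] gives [E_j(x+1) = E_j(x) + j E_(j-1)(x+1)/(x+1)].
   From it one gets [x * sum_n E_j(n+x)/(n(n+x)) = E_(j+1)(x)]: both sides are
   nondecreasing in [x], agree at [0] and differ by a 1-periodic function, which is
   therefore bounded by the increments of [E_(j+1)] between consecutive integers; these
   tend to [0] by Kronecker's lemma.  Summation by parts then yields
   [sum_n C(n+b)/(n(n+1)) = C(b)(b+3)/b].  Dropping the first [t] terms of this series at
   [b = alpha - t] evaluates [sum_n C(n+alpha)(1/(n+t) - 1/(n+t+1))], and the theorem
   follows by telescoping in [t] and partial fractions. *)

From Stdlib Require Import Reals Lra Lia ZArith ClassicalEpsilon.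
Open Scope R_scope.

Lemma series_value_eq (f : nat -> R) (l : R) :
  infinite_sum f l -> series_value f = l.
Proof.
  intro Hf. unfold series_value.
  apply (uniqueness_sum f); [|exact Hf].
  exact (epsilon_spec (inhabits 0) _ (ex_intro _ l Hf)).
Qed.

Lemma Un_cv_const (c : R) : Un_cv (fun _ => c) c.
Proof.
  intros e He; exists O; intros; unfold Rdist; rewrite Rminus_diag, Rabs_R0; lra.
Qed.

Lemma Un_cv_S (u : nat -> R) (l : R) : Un_cv u l -> Un_cv (fun n => u (S n)) l.
Proof.
  intros Hu e He. destruct (Hu e He) as [N HN]. exists N. intros n Hn. apply HN. lia.
Qed.

Lemma Un_cv_squeeze0 (u v : nat -> R) :
  Un_cv u 0 -> (forall n, 0 <= v n <= u n) -> Un_cv v 0.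
Proof.
  intros Hu Huv e He. destruct (Hu e He) as [N HN]. exists N. intros n Hn.
  specialize (HN n Hn). specialize (Huv n). unfold Rdist in *.
  rewrite Rminus_0_r, Rabs_right in * by lra. lra.
Qed.

Lemma Un_cv_inv_INR_S : Un_cv (fun n => / INR (S n)) 0.
Proof.
  apply cv_infty_cv_0. intro M. destruct (INR_unbounded M) as [N HN].
  exists N. intros n Hn. apply le_INR in Hn. rewrite S_INR. lra.
Qed.

Lemma infinite_sum_ext (f g : nat -> R) (l : R) :
  (forall i, f i = g i) -> infinite_sum f l -> infinite_sum g l.
Proof. intros E. apply Un_cv_ext. intro n. apply sum_eq. auto. Qed.

Lemma infinite_sum_zero : infinite_sum (fun _ => 0) 0.
Proof.
  apply (Un_cv_ext (fun _ => 0)); [|apply Un_cv_const].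
  induction n; simpl; lra.
Qed.

Lemma infinite_sum_plus (f g : nat -> R) (a b : R) :
  infinite_sum f a -> infinite_sum g b -> infinite_sum (fun i => f i + g i) (a + b).
Proof.
  intros Ha Hb. apply (Un_cv_ext (fun n => sum_f_R0 f n + sum_f_R0 g n)).
  - intro n. symmetry. apply sum_plus.
  - now apply CV_plus.
Qed.

Lemma infinite_sum_minus (f g : nat -> R) (a b : R) :
  infinite_sum f a -> infinite_sum g b -> infinite_sum (fun i => f i - g i) (a - b).
Proof.
  intros Ha Hb. apply (Un_cv_ext (fun n => sum_f_R0 f n - sum_f_R0 g n)).
  - intro n. symmetry. apply minus_sum.
  - now apply CV_minus.
Qed.

Lemma sum_f_R0_scal (c : R) (f : nat -> R) (N : nat) :
  sum_f_R0 (fun i => c * f i) N = c * sum_f_R0 f N.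
Proof. rewrite scal_sum. apply sum_eq. intros; ring. Qed.

Lemma infinite_sum_scal (c : R) (f : nat -> R) (a : R) :
  infinite_sum f a -> infinite_sum (fun i => c * f i) (c * a).
Proof.
  intros Ha. apply (Un_cv_ext (fun n => c * sum_f_R0 f n)).
  - intro n. symmetry. apply sum_f_R0_scal.
  - apply CV_mult; [apply Un_cv_const | exact Ha].
Qed.

Lemma infinite_sum_le (f g : nat -> R) (a b : R) :
  infinite_sum f a -> infinite_sum g b -> (forall i, f i <= g i) -> a <= b.
Proof.
  intros Ha Hb Hfg. apply (Rle_cv_lim (Un := sum_f_R0 f) (Vn := sum_f_R0 g)); auto.
  intro n. apply sum_Rle. auto.
Qed.

Lemma ex_infinite_sum_bounded (f : nat -> R) (B : R) :
  (forall i, 0 <= f i) -> (forall N, sum_f_R0 f N <= B) -> exists l, infinite_sum f l.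
Proof.
  intros Hf HB. destruct (growing_cv (sum_f_R0 f)) as [l Hl].
  - intro n. simpl. specialize (Hf (S n)). lra.
  - exists B. intros x [n ->]. apply HB.
  - now exists l.
Qed.

Lemma infinite_sum_drop (f : nat -> R) (l : R) (t : nat) :
  infinite_sum f l ->
  infinite_sum (fun i => f (i + t)%nat) (l - sum1 t (fun j => f (j - 1)%nat)).
Proof.
  intro Hf. induction t as [|t IH]; simpl.
  - rewrite Rminus_0_r. apply (infinite_sum_ext f); [|exact Hf].
    intro i. now rewrite Nat.add_0_r.
  - intros e He. destruct (IH e He) as [N HN]. exists N. intros n Hn.
    replace (sum_f_R0 (fun i => f (i + S t)%nat) n)
      with (sum_f_R0 (fun i => f (i + t)%nat) (S n) - f t).
    + rewrite Nat.sub_0_r. unfold Rdist.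
      set (s := sum_f_R0 (fun i => f (i + t)%nat) (S n)).
      set (d := sum1 t (fun j => f (j - 1)%nat)).
      replace (s - f t - (l - (d + f t))) with (s - (l - d)) by ring.
      apply HN. lia.
    + rewrite (decomp_sum _ (S n)) by lia. simpl pred. rewrite Nat.add_0_l.
      rewrite (sum_eq (fun i => f (S i + t)%nat) (fun i => f (i + S t)%nat))
        by (intros; f_equal; lia).
      ring.
Qed.

Lemma telescope (h : nat -> R) (N : nat) :
  sum_f_R0 (fun i => h (S i) - h i) N = h (S N) - h O.
Proof. induction N; simpl; [ring | rewrite IHN; ring]. Qed.

Lemma abel_summation (w c : nat -> R) (N : nat) :
  sum_f_R0 (fun i => w (S i) * (c i - c (S i))) N =
  w O * c O + sum_f_R0 (fun i => (w (S i) - w i) * c i) N - w (S N) * c (S N).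
Proof. induction N; simpl; [ring | rewrite IHN; ring]. Qed.

Lemma kronecker (u : nat -> R) (l : R) :
  infinite_sum (fun i => (u (S i) - u i) / INR (S i)) l ->
  Un_cv (fun n => u (S n) / INR (S n)) 0.
Proof.
  intro Hl. set (a := fun i => (u (S i) - u i) / INR (S i)) in *.
  set (P := sum_f_R0 a).
  (* u (n+1) = u 0 + (n+2) P n - sum_{m <= n} P m, then divide by n+1 and use Cesaro. *)
  assert (Hu : forall n, u (S n) = u O + INR (S (S n)) * P n - sum_f_R0 P n).
  { induction n.
    - unfold P, a; simpl. field.
    - assert (Ea : u (S (S n)) = u (S n) + a (S n) * INR (S (S n))).
      { unfold a. field. apply not_0_INR. lia. }
      rewrite Ea, IHn. unfold P. rewrite !tech5. rewrite !S_INR. ring. }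
  assert (Hmean : Un_cv (fun n => sum_f_R0 P n / INR (S n)) l).
  { exact (Un_cv_S _ _ (Cesaro_1 P l Hl)). }
  apply (Un_cv_ext (fun n => u O * / INR (S n) + P n + P n * / INR (S n)
                             - sum_f_R0 P n / INR (S n))).
  - intro n. rewrite (Hu n), (S_INR (S n)). field. apply not_0_INR. lia.
  - replace 0 with (u O * 0 + l + l * 0 - l) by ring.
    apply CV_minus; [|exact Hmean].
    apply CV_plus; [apply CV_plus|].
    + apply CV_mult; [apply Un_cv_const | apply Un_cv_inv_INR_S].
    + exact Hl.
    + apply CV_mult; [exact Hl | apply Un_cv_inv_INR_S].
Qed.

Definition Hm_term (m : nat) (a : R) (i : nat) : R :=
  / INR (i + 1) ^ m - / (INR (i + 1) + a) ^ m.

Lemma INR_add1_pos (i : nat) : 0 < INR (i + 1).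
Proof. rewrite plus_INR. simpl. pose proof (pos_INR i). lra. Qed.

Lemma Hm_term_le (m : nat) (a b : R) (i : nat) :
  0 <= a -> a <= b -> Hm_term m a i <= Hm_term m b i.
Proof.
  intros Ha Hab. unfold Hm_term. pose proof (INR_add1_pos i).
  assert (/ (INR (i + 1) + b) ^ m <= / (INR (i + 1) + a) ^ m).
  { apply Rinv_le_contravar; [apply pow_lt; lra | apply pow_incr; lra]. }
  lra.
Qed.

Lemma Hm_term_ge0 (m : nat) (a : R) (i : nat) : 0 <= a -> 0 <= Hm_term m a i.
Proof.
  intro Ha. replace 0 with (Hm_term m 0 i) by (unfold Hm_term; rewrite Rplus_0_r; ring).
  now apply Hm_term_le.
Qed.

(* For an integer shift the partial sums telescope to at most [1 + 1/2^m + ... + 1/n^m]. *)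
Lemma Hm_term_nat_partial_le (m n N : nat) : sum_f_R0 (Hm_term m (INR n)) N <= INR n.
Proof.
  revert N. induction n as [|n IH]; intro N.
  - rewrite (sum_eq _ (fun _ => 0)), sum_cte; [simpl; lra|].
    intros i _. unfold Hm_term. change (INR 0) with 0. rewrite Rplus_0_r. ring.
  - set (g := fun j => / INR (j + n + 1) ^ m).
    assert (Hg : forall j, 0 <= g j <= 1).
    { intro j. unfold g. split.
      - apply Rlt_le, Rinv_0_lt_compat, pow_lt, INR_add1_pos.
      - rewrite <- Rinv_1. apply Rinv_le_contravar; [lra|]. apply pow_R1_Rle.
        rewrite plus_INR. simpl. pose proof (pos_INR (j + n)). lra. }
    rewrite (sum_eq _ (fun i => Hm_term m (INR n) i - (g (S i) - g i))).
    + rewrite minus_sum, telescope. specialize (IH N). rewrite S_INR.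
      pose proof (Hg (S N)). pose proof (Hg O). lra.
    + intros i _. unfold Hm_term, g.
      replace (INR (i + 1) + INR (S n)) with (INR (S i + n + 1))
        by (rewrite !plus_INR, !S_INR; ring).
      replace (INR (i + 1) + INR n) with (INR (i + n + 1)) by (rewrite !plus_INR; ring).
      ring.
Qed.

Lemma Hm_spec (m : nat) (a : R) : 0 <= a -> infinite_sum (Hm_term m a) (Hm m a).
Proof.
  intro Ha. destruct (INR_unbounded a) as [n Hn].
  destruct (ex_infinite_sum_bounded (Hm_term m a) (INR n)) as [l Hl].
  - intro i. now apply Hm_term_ge0.
  - intro N. eapply Rle_trans; [|apply (Hm_term_nat_partial_le m n N)].
    apply sum_Rle. intros. apply Hm_term_le; lra.
  - unfold Hm. fold (Hm_term m a). now rewrite (series_value_eq _ _ Hl).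
Qed.

Lemma Hm_eq (m : nat) (a l : R) : 0 <= a -> infinite_sum (Hm_term m a) l -> Hm m a = l.
Proof. intros Ha Hl. exact (uniqueness_sum _ _ _ (Hm_spec m a Ha) Hl). Qed.

Lemma Hm0 (m : nat) : Hm m 0 = 0.
Proof.
  apply Hm_eq; [lra|]. apply (infinite_sum_ext (fun _ => 0)); [|apply infinite_sum_zero].
  intro i. unfold Hm_term. rewrite Rplus_0_r. ring.
Qed.

Lemma Hm_le (m : nat) (a b : R) : 0 <= a -> a <= b -> Hm m a <= Hm m b.
Proof.
  intros Ha Hab. apply (infinite_sum_le (Hm_term m a) (Hm_term m b)).
  - now apply Hm_spec.
  - apply Hm_spec. lra.
  - intro i. now apply Hm_term_le.
Qed.

Lemma Hm_ge0 (m : nat) (a : R) : 0 <= a -> 0 <= Hm m a.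
Proof. intro Ha. rewrite <- (Hm0 m). now apply Hm_le. Qed.

Lemma Hm_succ (m : nat) (a : R) : (1 <= m)%nat -> 0 <= a ->
  Hm m (a + 1) = Hm m a + / (a + 1) ^ m.
Proof.
  intros Hm1 Ha. apply Hm_eq; [lra|].
  set (g := fun i => / (INR i + (a + 1)) ^ m).
  apply (Un_cv_ext (fun N => sum_f_R0 (Hm_term m a) N + / (a + 1) ^ m - g (S N))).
  - intro N. rewrite (sum_eq (Hm_term m (a + 1)) (fun i => Hm_term m a i - (g (S i) - g i))).
    + rewrite minus_sum, telescope. unfold g. change (INR 0) with 0.
      rewrite Rplus_0_l. ring.
    + intros i _. unfold Hm_term, g. rewrite S_INR, plus_INR. simpl.
      replace (INR i + (a + 1)) with (INR i + 1 + a) by ring. ring.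
  - replace (Hm m a + / (a + 1) ^ m) with (Hm m a + / (a + 1) ^ m - 0) by ring.
    apply CV_minus; [apply CV_plus; [now apply Hm_spec | apply Un_cv_const]|].
    apply (Un_cv_squeeze0 (fun n => / INR (S n))); [apply Un_cv_inv_INR_S|].
    intro n. pose proof (pos_INR n). unfold g. rewrite S_INR. split.
    + apply Rlt_le, Rinv_0_lt_compat, pow_lt. lra.
    + apply Rinv_le_contravar; [lra|].
      replace m with (S (m - 1)) by lia. simpl.
      rewrite <- (Rmult_1_r (INR n + 1)) at 1.
      apply Rmult_le_compat; try lra. apply pow_R1_Rle. lra.
Qed.

(* [Hbell j] is the complete Bell polynomial [Y_j(0! H, 1! H^(2), 2! H^(3), 3! H^(4))]
   (zero beyond [j = 4]); thus [Hbell 3 = Cb] and [Hbell 4 = Qb]. *)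
Definition Hbell (j : nat) (x : R) : R :=
  match j with
  | O => 1
  | 1 => H x
  | 2 => H x ^ 2 + Hm 2 x
  | 3 => Cb x
  | 4 => Qb x
  | _ => 0
  end.

Lemma Hbell_succ (j : nat) (x : R) : (1 <= j <= 4)%nat -> 0 <= x ->
  Hbell j (x + 1) = Hbell j x + INR j * Hbell (j - 1) (x + 1) / (x + 1).
Proof.
  intros Hj Hx.
  destruct j as [|[|[|[|[|j]]]]]; try lia; simpl (_ - _)%nat; unfold Hbell, Cb, Qb, H;
    rewrite !Hm_succ by (auto; lia); simpl INR; field; lra.
Qed.

Lemma Hbell0 (j : nat) : (1 <= j)%nat -> Hbell j 0 = 0.
Proof.
  intro Hj. unfold Hbell, Cb, Qb, H. rewrite !Hm0.
  destruct j as [|[|[|[|[|j]]]]]; try lia; ring.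
Qed.

Lemma Hbell_le (j : nat) (x y : R) : 0 <= x -> x <= y -> Hbell j x <= Hbell j y.
Proof.
  intros Hx Hxy.
  assert (Hmon : forall m, 0 <= Hm m x <= Hm m y).
  { split; [now apply Hm_ge0 | now apply Hm_le]. }
  assert (Hmul : forall a a' b b', 0 <= a <= a' -> 0 <= b <= b' -> 0 <= a * b <= a' * b').
  { intros. split; [apply Rmult_le_pos | apply Rmult_le_compat]; lra. }
  pose proof (Hmon 1%nat) as A. pose proof (Hmon 2%nat) as B.
  pose proof (Hmon 3%nat) as C. pose proof (Hmon 4%nat) as D.
  pose proof (Hmul _ _ _ _ A A) as A2. pose proof (Hmul _ _ _ _ A2 A) as A3.
  pose proof (Hmul _ _ _ _ A3 A) as A4. pose proof (Hmul _ _ _ _ A B) as AB.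
  pose proof (Hmul _ _ _ _ A2 B) as A2B. pose proof (Hmul _ _ _ _ A C) as AC.
  pose proof (Hmul _ _ _ _ B B) as B2.
  destruct j as [|[|[|[|[|j]]]]]; unfold Hbell, Cb, Qb, H; simpl; lra.
Qed.

Lemma Hbell_ge0 (j : nat) (x : R) : 0 <= x -> 0 <= Hbell j x.
Proof.
  intro Hx. apply Rle_trans with (Hbell j 0); [|now apply Hbell_le].
  destruct j; [simpl; lra | rewrite Hbell0; lia || lra].
Qed.

Definition bell_term (j : nat) (x : R) (i : nat) : R :=
  Hbell j (INR (S i) + x) / (INR (S i) * (INR (S i) + x)).

Definition bell_sum (j : nat) (x : R) : R := series_value (bell_term j x).

Lemma INR_S_pos (i : nat) : 0 < INR (S i).
Proof. apply lt_0_INR. lia. Qed.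

Lemma bell_term_ge0 (j : nat) (x : R) (i : nat) : 0 <= x -> 0 <= bell_term j x i.
Proof.
  intro Hx. unfold bell_term. pose proof (INR_S_pos i).
  apply Rmult_le_pos; [apply Hbell_ge0; lra|].
  apply Rlt_le, Rinv_0_lt_compat, Rmult_lt_0_compat; lra.
Qed.

Lemma Hbell_diff (j : nat) (x : R) (i : nat) : (j <= 4)%nat -> 0 <= x ->
  (Hbell j (INR (S i) + x) - Hbell j (INR i + x)) / INR (S i)
  = INR j * bell_term (j - 1) x i.
Proof.
  intros Hj Hx. destruct j as [|j]; [simpl; unfold Rdiv; ring|].
  pose proof (pos_INR i). unfold bell_term.
  replace (INR (S i) + x) with (INR i + x + 1) by (rewrite S_INR; ring).
  rewrite (Hbell_succ (S j) (INR i + x)) by (lia || lra). field.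
  split; [lra | apply not_0_INR; lia].
Qed.

Lemma bell_term_le (j : nat) (x : R) (i : nat) : 0 <= x ->
  bell_term j x i <= 2 * (Hbell j (INR (S i) + x) * (/ INR (S i) - / INR (S (S i)))).
Proof.
  intro Hx. unfold bell_term. pose proof (INR_S_pos i).
  pose proof (Hbell_ge0 j (INR (S i) + x) ltac:(lra)).
  rewrite (S_INR (S i)). set (m := INR (S i)) in *.
  assert (1 <= m) by (unfold m; rewrite S_INR; pose proof (pos_INR i); lra).
  replace (2 * (Hbell j (m + x) * (/ m - / (m + 1))))
    with (Hbell j (m + x) * / (m * (m + 1) / 2)) by (field; lra).
  apply Rmult_le_compat_l; [lra|].
  apply Rinv_le_contravar; nra.
Qed.

Lemma bell_term_partial_le (j : nat) (x B : R) (N : nat) : 0 <= x ->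
  (forall N, sum_f_R0 (fun i => (Hbell j (INR (S i) + x) - Hbell j (INR i + x))
                                / INR (S i)) N <= B) ->
  sum_f_R0 (bell_term j x) N <= 2 * (Hbell j x + B).
Proof.
  intros Hx HB. set (w := fun i => Hbell j (INR i + x)).
  apply Rle_trans with
    (2 * sum_f_R0 (fun i => w (S i) * (/ INR (S i) - / INR (S (S i)))) N).
  { rewrite <- sum_f_R0_scal. apply sum_Rle. intros i _. now apply bell_term_le. }
  rewrite (abel_summation w (fun i => / INR (S i))).
  specialize (HB N). unfold w in *. simpl (INR 1). rewrite Rinv_1, Rmult_1_r.
  change (INR 0) with 0. rewrite Rplus_0_l.
  assert (0 <= Hbell j (INR (S N) + x) * / INR (S (S N))).
  { apply Rmult_le_pos; [apply Hbell_ge0; pose proof (INR_S_pos N); lra|].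
    apply Rlt_le, Rinv_0_lt_compat, INR_S_pos. }
  lra.
Qed.

Lemma bell_sum_spec (j : nat) (x : R) : (j <= 3)%nat -> 0 <= x ->
  infinite_sum (bell_term j x) (bell_sum j x).
Proof.
  intros Hj Hx.
  enough (Hconv : exists l, infinite_sum (bell_term j x) l).
  { destruct Hconv as [l Hl]. unfold bell_sum. now rewrite (series_value_eq _ _ Hl). }
  induction j as [|j IH].
  - apply (ex_infinite_sum_bounded _ (2 * (Hbell 0 x + 0))).
    { intro i. now apply bell_term_ge0. }
    intro N. apply bell_term_partial_le; [exact Hx|]. intro M.
    rewrite (sum_eq _ (fun _ => 0)), sum_cte by (intros; simpl; unfold Rdiv; ring). lra.
  - destruct (IH ltac:(lia)) as [l Hl].
    apply (ex_infinite_sum_bounded _ (2 * (Hbell (S j) x + INR (S j) * l))).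
    { intro i. now apply bell_term_ge0. }
    intro N. apply bell_term_partial_le; [exact Hx|]. intro M.
    rewrite (sum_eq _ (fun i => INR (S j) * bell_term j x i)), sum_f_R0_scal.
    + apply Rmult_le_compat_l; [apply pos_INR|].
      apply (sum_incr _ _ _ Hl). intro i. now apply bell_term_ge0.
    + intros i _. rewrite Hbell_diff by (lia || lra).
      replace (S j - 1)%nat with j by lia. ring.
Qed.

Lemma Hbell_div_cv0 (j : nat) (x : R) : (j <= 4)%nat -> 0 <= x ->
  Un_cv (fun n => Hbell j (INR (S n) + x) / INR (S n)) 0.
Proof.
  intros Hj Hx.
  apply (kronecker (fun i => Hbell j (INR i + x)) (INR j * bell_sum (j - 1) x)).
  apply (infinite_sum_ext (fun i => INR j * bell_term (j - 1) x i)).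
  - intro i. symmetry. now apply Hbell_diff.
  - apply infinite_sum_scal, bell_sum_spec; lia || lra.
Qed.

Lemma bell_sum_succ (j : nat) (x : R) : (1 <= j <= 3)%nat -> 0 <= x ->
  (x + 1) * bell_sum j (x + 1) - x * bell_sum j x
  = INR j * bell_sum (j - 1) (x + 1) + Hbell j (x + 1) / (x + 1).
Proof.
  intros Hj Hx.
  set (h := fun i => Hbell j (INR (S i) + x) / (INR (S i) + x)).
  (* Splitting [(x+1)/(n(n+1+x))] and [x/(n(n+x))] into partial fractions, the
     difference of the two series is [j * bell_sum (j-1) (x+1)] minus a telescoping sum. *)
  assert (Hterm : forall i, (x + 1) * bell_term j (x + 1) i - x * bell_term j x i
                            = INR j * bell_term (j - 1) (x + 1) i - (h (S i) - h i)).
  { intro i. rewrite <- Hbell_diff by (lia || lra). unfold bell_term, h.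
    pose proof (INR_S_pos i).
    replace (INR (S (S i)) + x) with (INR (S i) + (x + 1)) by (rewrite (S_INR (S i)); ring).
    replace (INR i + (x + 1)) with (INR (S i) + x) by (rewrite S_INR; ring).
    field. lra. }
  apply (uniqueness_sum (fun i => (x + 1) * bell_term j (x + 1) i - x * bell_term j x i)).
  - apply infinite_sum_minus; apply infinite_sum_scal, bell_sum_spec; lia || lra.
  - apply (Un_cv_ext
             (fun N => INR j * sum_f_R0 (bell_term (j - 1) (x + 1)) N + h O - h (S N))).
    { intro N. rewrite (sum_eq _ _ _ (fun i _ => Hterm i)), minus_sum, telescope.
      rewrite sum_f_R0_scal. ring. }
    replace (INR j * bell_sum (j - 1) (x + 1) + Hbell j (x + 1) / (x + 1))
      with (INR j * bell_sum (j - 1) (x + 1) + h O - 0)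
      by (unfold h; rewrite S_INR; change (INR 0) with 0;
          rewrite Rplus_0_l, (Rplus_comm 1 x); ring).
    apply CV_minus; [apply CV_plus; [apply CV_mult | apply Un_cv_const]|].
    + apply Un_cv_const.
    + apply bell_sum_spec; lia || lra.
    + apply (Un_cv_squeeze0 (fun n => Hbell j (INR (S (S n)) + x) / INR (S (S n)))).
      { apply (Un_cv_S (fun n => Hbell j (INR (S n) + x) / INR (S n))), Hbell_div_cv0;
          lia || lra. }
      intro n. unfold h. pose proof (INR_S_pos (S n)).
      pose proof (Hbell_ge0 j (INR (S (S n)) + x) ltac:(lra)). split.
      * apply Rmult_le_pos; [lra|]. apply Rlt_le, Rinv_0_lt_compat. lra.
      * apply Rmult_le_compat_l; [lra|]. apply Rinv_le_contravar; lra.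
Qed.

Lemma eq_of_monotone_periodic_diff (A B : R -> R) :
  (forall x y, 0 <= x -> x <= y -> A x <= A y) ->
  (forall x y, 0 <= x -> x <= y -> B x <= B y) ->
  (forall x, 0 <= x -> A (x + 1) - B (x + 1) = A x - B x) ->
  A 0 = B 0 ->
  Un_cv (fun n => B (INR n + 1) - B (INR n)) 0 ->
  forall x, 0 <= x -> A x = B x.
Proof.
  intros HA HB Hper H0 Hinc x Hx.
  assert (Hshift : forall n, A (x + INR n) - B (x + INR n) = A x - B x).
  { induction n as [|n IH]; [simpl; now rewrite Rplus_0_r|].
    rewrite S_INR, <- Rplus_assoc, Hper; [exact IH | pose proof (pos_INR n); lra]. }
  assert (Hnat : forall n, A (INR n) = B (INR n)).
  { induction n as [|n IH]; [exact H0|].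
    rewrite S_INR. pose proof (Hper (INR n) (pos_INR n)). lra. }
  set (M := Z.to_nat (Zfloor x)).
  assert (HM : INR M <= x < INR M + 1).
  { unfold M. rewrite INR_IZR_INZ, Z2Nat.id; [apply Zfloor_bound|].
    apply Zfloor_lub. exact Hx. }
  (* On [m, m+1] both functions lie between their values at the integer endpoints,
     where they agree; so the gap is at most the increment of [B]. *)
  assert (Hgap : forall n, Rabs (A x - B x) <= B (INR (M + n) + 1) - B (INR (M + n))).
  { intro n. rewrite <- (Hshift n).
    pose proof (Hnat (M + n)%nat) as E0. pose proof (Hnat (S (M + n))) as E1.
    rewrite S_INR in E1. set (m := INR (M + n)) in *.
    pose proof (pos_INR M). pose proof (pos_INR n).
    assert (Hm : 0 <= m <= x + INR n) by (unfold m; rewrite plus_INR; lra).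
    assert (Hm1 : x + INR n <= m + 1) by (unfold m; rewrite plus_INR; lra).
    pose proof (HA m (x + INR n) ltac:(lra) ltac:(lra)).
    pose proof (HA (x + INR n) (m + 1) ltac:(lra) ltac:(lra)).
    pose proof (HB m (x + INR n) ltac:(lra) ltac:(lra)).
    pose proof (HB (x + INR n) (m + 1) ltac:(lra) ltac:(lra)).
    apply Rabs_le. lra. }
  destruct (Req_dec (A x - B x) 0) as [Hz|Hnz]; [lra|exfalso].
  destruct (Hinc _ (Rabs_pos_lt _ Hnz)) as [N HN].
  specialize (HN (M + N)%nat ltac:(lia)). specialize (Hgap N).
  unfold Rdist in HN. rewrite Rminus_0_r in HN.
  pose proof (Rle_abs (B (INR (M + N) + 1) - B (INR (M + N)))). lra.
Qed.

Lemma mul_bell_sum_le (j : nat) (x y : R) : (j <= 3)%nat -> 0 <= x -> x <= y ->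
  x * bell_sum j x <= y * bell_sum j y.
Proof.
  intros Hj Hx Hxy.
  apply (infinite_sum_le (fun i => x * bell_term j x i) (fun i => y * bell_term j y i)).
  - apply infinite_sum_scal, bell_sum_spec; auto.
  - apply infinite_sum_scal, bell_sum_spec; auto; lra.
  - intro i. unfold bell_term. pose proof (INR_S_pos i). set (m := INR (S i)) in *.
    assert (Hw : x / (m * (m + x)) <= y / (m * (m + y))).
    { apply Rmult_le_reg_r with (m * (m + x) * (m + y)); [apply Rmult_lt_0_compat; nra|].
      field_simplify; [nra | lra | lra]. }
    replace (x * (Hbell j (m + x) / (m * (m + x))))
      with (Hbell j (m + x) * (x / (m * (m + x)))) by (field; lra).
    replace (y * (Hbell j (m + y) / (m * (m + y))))
      with (Hbell j (m + y) * (y / (m * (m + y)))) by (field; lra).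
    apply Rmult_le_compat; [apply Hbell_ge0; lra | | apply Hbell_le; lra | exact Hw].
    apply Rmult_le_pos; [lra|]. apply Rlt_le, Rinv_0_lt_compat. nra.
Qed.

Lemma bell_sum_closed (j : nat) (x : R) : (j <= 2)%nat -> 0 <= x ->
  x * bell_sum j x = Hbell (S j) x.
Proof.
  revert x. induction j as [|j IH]; intros x Hj Hx.
  - apply (uniqueness_sum (fun i => x * bell_term 0 x i)).
    + apply infinite_sum_scal, bell_sum_spec; lia || lra.
    + apply (infinite_sum_ext (Hm_term 1 x)); [|now apply Hm_spec].
      intro i. unfold Hm_term, bell_term. rewrite Nat.add_1_r.
      pose proof (INR_S_pos i). rewrite !pow_1.
      change (Hbell 0 ?y) with 1. field. lra.
  - apply (eq_of_monotone_periodic_diff (fun y => y * bell_sum (S j) y) (Hbell (S (S j)))).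
    + intros. apply mul_bell_sum_le; lia || lra.
    + intros. now apply Hbell_le.
    + intros y Hy.
      pose proof (bell_sum_succ (S j) y ltac:(lia) Hy) as Hstep.
      pose proof (IH (y + 1) ltac:(lia) ltac:(lra)) as Hclosed.
      replace (S j - 1)%nat with j in Hstep by lia.
      rewrite (Hbell_succ (S (S j)) y) by (lia || lra).
      replace (S (S j) - 1)%nat with (S j) by lia.
      replace (bell_sum j (y + 1)) with (Hbell (S j) (y + 1) / (y + 1)) in Hstep
        by (rewrite <- Hclosed; field; lra).
      rewrite !S_INR in *. lra.
    + rewrite Hbell0 by lia. ring.
    + apply (Un_cv_ext (fun n => INR (S (S j)) * (Hbell (S j) (INR (S n) + 0) / INR (S n)))).
      * intro n. rewrite (Hbell_succ (S (S j)) (INR n)) by (lia || apply pos_INR).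
        replace (S (S j) - 1)%nat with (S j) by lia.
        rewrite Rplus_0_r, (S_INR n). field. pose proof (pos_INR n). lra.
      * replace 0 with (INR (S (S j)) * 0) by ring.
        apply CV_mult; [apply Un_cv_const | apply Hbell_div_cv0; lia || lra].
    + exact Hx.
Qed.

Lemma Hbell_consecutive_sum (j : nat) (b : R) : (1 <= j <= 3)%nat -> 0 < b ->
  infinite_sum (fun i => Hbell j (INR (S i) + b) / (INR (S i) * (INR (S i) + 1)))
    (Hbell j b * (b + INR j) / b).
Proof.
  intros Hj Hb. set (w := fun i => Hbell j (INR i + b)).
  apply (infinite_sum_ext (fun i => w (S i) * (/ INR (S i) - / INR (S (S i))))).
  { intro i. unfold w. rewrite (S_INR (S i)). pose proof (INR_S_pos i). field. lra. }
  apply (Un_cv_ext (fun N => w O * / INR 1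
                             + sum_f_R0 (fun i => INR j * bell_term (j - 1) b i) N
                             - w (S N) * / INR (S (S N)))).
  { intro N. rewrite (abel_summation w (fun i => / INR (S i))). do 2 f_equal.
    apply sum_eq. intros i _. unfold w. rewrite <- Hbell_diff by (lia || lra). reflexivity. }
  replace (Hbell j b * (b + INR j) / b)
    with (w O * / INR 1 + INR j * bell_sum (j - 1) b - 0).
  2: { pose proof (bell_sum_closed (j - 1) b ltac:(lia) ltac:(lra)) as Hclosed.
       replace (S (j - 1)) with j in Hclosed by lia.
       replace (bell_sum (j - 1) b) with (Hbell j b / b) by (rewrite <- Hclosed; field; lra).
       unfold w. simpl INR. rewrite Rplus_0_l. field. lra. }
  apply CV_minus; [apply CV_plus; [apply Un_cv_const|]|].
  - apply (infinite_sum_scal (INR j) (bell_term (j - 1) b)), bell_sum_spec; lia || lra.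
  - apply (Un_cv_squeeze0 (fun n => Hbell j (INR (S n) + b) / INR (S n))).
    { apply Hbell_div_cv0; lia || lra. }
    intro n. unfold w. pose proof (INR_S_pos n). pose proof (INR_S_pos (S n)).
    pose proof (Hbell_ge0 j (INR (S n) + b) ltac:(lra)). split.
    + apply Rmult_le_pos; [lra|]. apply Rlt_le, Rinv_0_lt_compat. lra.
    + apply Rmult_le_compat_l; [lra|]. apply Rinv_le_contravar; [lra|].
      rewrite (S_INR (S n)). lra.
Qed.

Lemma sum1_succ_l (t : nat) (f : nat -> R) :
  sum1 (S t) f = f 1%nat + sum1 t (fun j => f (S j)).
Proof. induction t as [|t IH]; simpl in *; [ring | rewrite IH; ring]. Qed.

Lemma sum1_lin (t : nat) (a b : R) (f g : nat -> R) :
  sum1 t (fun j => a * f j + b * g j) = a * sum1 t f + b * sum1 t g.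
Proof. induction t as [|t IH]; simpl; [ring | rewrite IH; ring]. Qed.

Lemma sum1_ext (t : nat) (f g : nat -> R) :
  (forall j, (1 <= j <= t)%nat -> f j = g j) -> sum1 t f = sum1 t g.
Proof.
  induction t as [|t IH]; intro E; simpl; [reflexivity|].
  rewrite IH, (E (S t)); [reflexivity | lia | intros; apply E; lia].
Qed.

(* [Phi alpha s] is [alpha - s] times the braced expression of the theorem. *)
Definition Phi (alpha : R) (s : nat) : R :=
  Qb (alpha - INR s) - (alpha - INR s) *
    sum1 s (fun j => Cb (alpha + INR j - INR s) / (INR j * (alpha + INR j - INR s))).

Lemma Phi_sub_succ (alpha : R) (t : nat) : INR t + 1 < alpha ->
  let b := alpha - INR t in
  Phi alpha t - Phi alpha (S t)
  = Cb b * (b + 3) / b - sum1 t (fun j => Cb (INR j + b) / (INR j * (INR j + 1))).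
Proof.
  intros Ht b. unfold Phi. rewrite sum1_succ_l.
  replace (alpha - INR (S t)) with (b - 1) by (unfold b; rewrite S_INR; ring).
  replace (alpha + INR 1 - INR (S t)) with b by (unfold b; rewrite INR_1, S_INR; ring).
  assert (HQ : Qb b = Qb (b - 1) + 4 * Cb b / b).
  { change (Qb b) with (Hbell 4 b).
    replace b with (b - 1 + 1) at 1 by ring.
    rewrite Hbell_succ by (lia || (unfold b in *; lra)).
    replace (b - 1 + 1) with b by ring. replace (INR 4) with 4 by (simpl; ring). reflexivity. }
  fold b. rewrite HQ. cbv beta.
  set (F := fun j => Cb (alpha + INR j - INR t) / (INR j * (alpha + INR j - INR t))).
  set (G := fun j => Cb (alpha + INR (S j) - INR (S t))
                     / (INR (S j) * (alpha + INR (S j) - INR (S t)))).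
  set (K := fun j => Cb (INR j + b) / (INR j * (INR j + 1))).
  set (A := fun j => Cb (INR j + b) / (INR j * (INR j + b))).
  set (A' := fun j => Cb (INR j + b) / ((INR j + 1) * (INR j + b))).
  rewrite (sum1_ext t F A), (sum1_ext t G A'),
    (sum1_ext t K (fun j => b * A j + - (b - 1) * A' j)).
  - rewrite sum1_lin. simpl INR. field. unfold b. lra.
  - intros j Hj. unfold K, A, A'.
    assert (1 <= INR j) by (apply (le_INR 1); lia).
    field. unfold b in *. lra.
  - intros j _. unfold G, A', b. rewrite !S_INR.
    now replace (alpha + (INR j + 1) - (INR t + 1)) with (INR j + (alpha - INR t)) by ring.
  - intros j _. unfold F, A, b.
    now replace (alpha + INR j - INR t) with (INR j + (alpha - INR t)) by ring.
Qed.

Lemma Cb_series_step (alpha : R) (t : nat) : INR t + 1 < alpha ->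
  infinite_sum (fun i => Cb (INR (i + 1) + alpha)
                         * (/ (INR (i + 1) + INR t) - / (INR (i + 1) + INR (S t))))
    (Phi alpha t - Phi alpha (S t)).
Proof.
  intro Ht. rewrite (Phi_sub_succ alpha t Ht). set (b := alpha - INR t).
  set (g := fun i => Hbell 3 (INR (S i) + b) / (INR (S i) * (INR (S i) + 1))).
  pose proof (infinite_sum_drop g _ t
                (Hbell_consecutive_sum 3 b ltac:(lia) ltac:(unfold b; lra))) as Hdrop.
  replace (Cb b * (b + 3) / b - _)
    with (Hbell 3 b * (b + INR 3) / b - sum1 t (fun j => g (j - 1)%nat)).
  2: { f_equal; [simpl INR; unfold Hbell; field; unfold b; lra|].
       apply sum1_ext. intros j Hj. unfold g. now replace (S (j - 1)) with j by lia. }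
  refine (infinite_sum_ext _ _ _ _ Hdrop). intro i. unfold g.
  pose proof (INR_add1_pos i). pose proof (pos_INR t).
  replace (INR (S (i + t))) with (INR (i + 1) + INR t) by (rewrite <- plus_INR; f_equal; lia).
  replace (INR (i + 1) + INR t + b) with (INR (i + 1) + alpha) by (unfold b; ring).
  rewrite S_INR. unfold Hbell. field. lra.
Qed.

Lemma Cb_series_telescope (alpha : R) (r d : nat) : INR (r + d) < alpha ->
  infinite_sum (fun i => Cb (INR (i + 1) + alpha)
                         * (/ (INR (i + 1) + INR r) - / (INR (i + 1) + INR (r + d))))
    (Phi alpha r - Phi alpha (r + d)).
Proof.
  induction d as [|d IH]; intro Hd.
  - rewrite Nat.add_0_r, Rminus_diag.
    apply (infinite_sum_ext (fun _ => 0)); [intro; ring | apply infinite_sum_zero].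
  - rewrite Nat.add_succ_r, S_INR in *.
    replace (Phi alpha r - Phi alpha (S (r + d)))
      with (Phi alpha r - Phi alpha (r + d) + (Phi alpha (r + d) - Phi alpha (S (r + d))))
      by ring.
    refine (infinite_sum_ext _ _ _ _
              (infinite_sum_plus _ _ _ _ (IH ltac:(lra)) (Cb_series_step alpha (r + d) Hd))).
    intro i. rewrite S_INR. ring.
Qed.

Theorem theorem2p7 (r k : nat) (alpha : R) :
  (r < k)%nat -> INR k < alpha ->
  infinite_sum
    (fun i => let n := INR (i + 1) in
       Cb (n + alpha) / ((n + INR r) * (n + INR k)))
    ((INR k - alpha) / (INR k - INR r) *
       (Qb (alpha - INR k) / (alpha - INR k)
        - sum1 k (fun j => Cb (alpha + INR j - INR k) /
                             (INR j * (alpha + INR j - INR k))))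
     + (alpha - INR r) / (INR k - INR r) *
       (Qb (alpha - INR r) / (alpha - INR r)
        - sum1 r (fun j => Cb (alpha + INR j - INR r) /
                             (INR j * (alpha + INR j - INR r))))).
Proof.
  intros Hrk Hk.
  assert (Hrk' : INR r < INR k) by now apply lt_INR.
  pose proof (pos_INR r).
  pose proof (Cb_series_telescope alpha r (k - r)) as Htel.
  replace (r + (k - r))%nat with k in Htel by lia.
  match goal with |- infinite_sum _ ?v =>
    replace v with (/ (INR k - INR r) * (Phi alpha r - Phi alpha k))
      by (unfold Phi; field; lra)
  end.
  refine (infinite_sum_ext _ _ _ _ (infinite_sum_scal _ _ _ (Htel Hk))).
  intro i. cbv zeta. pose proof (INR_add1_pos i). field. lra.
Qed.
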